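(* If $\mathcal{S}\in\mathrm{Rep}$, then every formal extended multi-segment in $[\mathcal{S}]$ is an extended multi-segment.
   Context: Formal extended segment: $([A,B]_\rho,\mu)$ with $\rho$ irreducible self-dual supercuspidal of some $\mathrm{GL}_d(F)$ ($F$ $p$-adic), $A-B\in\mathbb{Z}_{\ge0}$, $\mu\in\mathbb{Z}$, $\mu\equiv b\pmod2$ with $b=A-B+1$, $a=A+B+1$; extended segment if moreover $|\mu|\le b$. A formal extended multi-segment $\mathcal{S}$: a finite set $C_{\mathcal{S}}$ of such $\rho$ and sequences $(([A_i^\rho,B_i^\rho]_\rho,\mu_i^\rho))_{i=1}^{n_\rho}$ of formal extended segments with: $A_i^\rho>A_j^\rho$ and $B_i^\rho>B_j^\rho$ imply $i>j$; $A_i^\rho+B_i^\rho\ge0$; $\bigoplus_{\rho,i}\rho\boxtimes S_{a_i^\rho}\boxtimes S_{b_i^\rho}$ is an Arthur parameter of good parity for some $G_n$ ($G_n$ split $\mathrm{SO}_{2n+1}(F)$ or $\mathrm{Sp}_{2n}(F)$); $\sum_\rho\sum_i(\lfloor\mu_i^\rho/2\rfloor+\mu_i^\rho\sum_{j<i}(b_j^\rho-1))\equiv0\pmod2$. Extended multi-segment: all entries are extended segments. Admissible: for each $\rho$ with some $B_i^\rho<0$, $B_i^\rho>B_j^\rho\Rightarrow i>j$. Condition (N): $|A_i^\rho-A_{i-1}^\rho|+|B_i^\rho-B_{i-1}^\rho|\ge|\mu_i^\rho-\mu_{i-1}^\rho|$ for all $\rho$, $1<i\le n_\rho$. Reorder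 $R_i^\rho$ (changing only positions $i,i+1$ of the $\rho$-sequence): if $[A_i,B_i]\subseteq[A_{i+1},B_{i+1}]$, replace by $([A_{i+1},B_{i+1}]_\rho,2\mu_i-\mu_{i+1}),([A_i,B_i]_\rho,\mu_i)$; if $[A_i,B_i]\supseteq[A_{i+1},B_{i+1}]$, replace by $([A_{i+1},B_{i+1}]_\rho,\mu_{i+1}),([A_i,B_i]_\rho,2\mu_{i+1}-\mu_i)$; if $A_{i+1}\ge A_i$, $B_{i+1}\ge B_i$, do nothing. $[\mathcal{S}]$ is the equivalence class generated by these operations. $\mathrm{Rep}$: admissible extended multi-segments $\mathcal{S}$ such that every element of $[\mathcal{S}]$ satisfies (N), and $|\hat\mu_i^\rho|\le a_i^\rho$ for all $i,\rho$, where $\hat\mu_i^\rho=\mu_i^\rho$ if $B_i^\rho\in\mathbb{Z}$ and $\mu_i^\rho-1$ otherwise. *)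

From HB Require Import structures.
From mathcomp Require Import all_boot all_order all_algebra.
From Stdlib Require Import Relations.
Set Implicit Arguments. Unset Strict Implicit. Unset Printing Implicit Defensive.
Import Order.TTheory GRing.Theory Num.Theory.
Local Open Scope ring_scope.

(* A (formal) extended segment ([A,B]_rho, mu): A, B are half-integers
   (rationals), mu an integer. The label rho is stored in the multi-segment. *)
Record fseg := FSeg { sA : rat; sB : rat; smu : int }.

Definition fseg0 : fseg := FSeg 0 0 0.

Definition fseg_to (s : fseg) : rat * rat * int := (sA s, sB s, smu s).
Definition fseg_of (p : rat * rat * int) : fseg := FSeg p.1.1 p.1.2 p.2.
Lemma fseg_toK : cancel fseg_to fseg_of. Proof. by case. Qed.
HB.instance Definition _ := Equality.copy fseg (can_type fseg_toK).

Definition sb (s : fseg) : rat := sA s - sB s + 1.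
Definition sa (s : fseg) : rat := sA s + sB s + 1.
(* the same, as integers (exact under the formal-segment conditions) *)
Definition sbi (s : fseg) : int := Num.floor (sb s).
Definition sai (s : fseg) : int := Num.floor (sa s).
Definition sbn (s : fseg) : nat := `|sbi s|%N.
Definition san (s : fseg) : nat := `|sai s|%N.

Definition is_fseg (s : fseg) : Prop :=
  [/\ (2 * sB s) \is a Num.int, (sA s - sB s) \is a Num.int,
      0 <= sA s - sB s & (2 %| smu s - sbi s)%Z].

Definition is_eseg (s : fseg) : Prop :=
  is_fseg s /\ ((`|smu s|)%:~R <= sb s).

(* A multi-segment: a finite set C_S of rho's (a duplicate-free list) and,
   for each rho, a sequence of segments (values outside C_S are irrelevant). *)
Record mseg (Rho : Type) := MSeg { msC : seq Rho; msF : Rho -> seq fseg }.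

Section MSeg.
Variable Rho : eqType.
(* Abstract data of the self-dual supercuspidal rho of GL_d(F):
   dimr rho = d, orthr rho = true iff rho is of orthogonal type
   (false = symplectic type), detr rho = the (quadratic) determinant character
   of rho, in an abelian group Q written additively. *)
Variables (dimr : Rho -> nat) (orthr : Rho -> bool).
Variables (Q : zmodType) (detr : Rho -> Q).

(* rho (x) S_a (x) S_b is orthogonal iff sign(rho) * (-1)^(a-1) * (-1)^(b-1) = +1 *)
Definition summand_orth (r : Rho) (s : fseg) : bool :=
  orthr r == ~~ odd ((san s).-1 + (sbn s).-1).

Definition param_dim (S : mseg Rho) : nat :=
  (\sum_(r <- msC S) \sum_(s <- msF S r) dimr r * san s * sbn s)%N.

(* det (rho (x) S_a (x) S_b) = det(rho)^(a b) (det S_k = 1) *)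
Definition param_det (S : mseg Rho) : Q :=
  \sum_(r <- msC S) \sum_(s <- msF S r) detr r *+ (san s * sbn s).

(* psi = (+)_{rho,i} rho (x) S_{a_i} (x) S_{b_i} is an Arthur parameter of good
   parity for some G_n: either G_n = SO_{2n+1} (dual Sp_{2n}(C): all summands
   symplectic, dim 2n) or G_n = Sp_{2n} (dual SO_{2n+1}(C): all summands
   orthogonal, dim 2n+1, trivial determinant). *)
Definition arthur_good_parity (S : mseg Rho) : Prop :=
  exists n : nat,
    (param_dim S = n.*2 /\
     forall r, r \in msC S -> forall s, s \in msF S r -> ~~ summand_orth r s)
    \/
    [/\ param_dim S = n.*2.+1,
        (forall r, r \in msC S -> forall s, s \in msF S r -> summand_orth r s)
      & param_det S = 0].

Definition sign_sum (S : mseg Rho) : int :=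
  \sum_(r <- msC S) \sum_(i < size (msF S r))
     ((smu (nth fseg0 (msF S r) i) %/ 2)%Z
      + smu (nth fseg0 (msF S r) i) *
          \sum_(j < i) (sbi (nth fseg0 (msF S r) j) - 1)).

Definition is_fmseg (S : mseg Rho) : Prop :=
  [/\ uniq (msC S) /\
      (forall r, r \in msC S -> forall s, s \in msF S r -> is_fseg s),
      (forall r, r \in msC S -> forall i j : nat,
          (i < size (msF S r))%N -> (j < size (msF S r))%N ->
          sA (nth fseg0 (msF S r) j) < sA (nth fseg0 (msF S r) i) ->
          sB (nth fseg0 (msF S r) j) < sB (nth fseg0 (msF S r) i) ->
          (j < i)%N),
      (forall r, r \in msC S -> forall s, s \in msF S r -> 0 <= sA s + sB s),
      arthur_good_parity S
    & (2 %| sign_sum S)%Z].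

Definition is_emseg (S : mseg Rho) : Prop :=
  is_fmseg S /\ (forall r, r \in msC S -> forall s, s \in msF S r -> is_eseg s).

Definition admissible (S : mseg Rho) : Prop :=
  forall r, r \in msC S ->
    (exists2 s, s \in msF S r & sB s < 0) ->
    forall i j : nat, (i < size (msF S r))%N -> (j < size (msF S r))%N ->
      sB (nth fseg0 (msF S r) j) < sB (nth fseg0 (msF S r) i) -> (j < i)%N.

(* condition (N) (0-indexed: positions i-1, i with 0 < i < n) *)
Definition condN (S : mseg Rho) : Prop :=
  forall r, r \in msC S -> forall i : nat, (0 < i < size (msF S r))%N ->
    let x := nth fseg0 (msF S r) i.-1 in
    let y := nth fseg0 (msF S r) i in
    (`|smu y - smu x|)%:~R <= `|sA y - sA x| + `|sB y - sB x|.

Definition muhat (s : fseg) : int :=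
  if sB s \is a Num.int then smu s else smu s - 1.

(* the operation R_i on a single rho-sequence (0-indexed positions i, i+1) *)
Definition reorder_seq (i : nat) (l : seq fseg) : seq fseg :=
  let x := nth fseg0 l i in
  let y := nth fseg0 l i.+1 in
  if (sB y <= sB x) && (sA x <= sA y) then
    set_nth fseg0 (set_nth fseg0 l i (FSeg (sA y) (sB y) (2 * smu x - smu y)))
            i.+1 x
  else if (sB x <= sB y) && (sA y <= sA x) then
    set_nth fseg0 (set_nth fseg0 l i y)
            i.+1 (FSeg (sA x) (sB x) (2 * smu y - smu x))
  else l.

Definition reorder_step (S S' : mseg Rho) : Prop :=
  exists2 r, r \in msC S &
  exists2 i : nat, (i.+1 < size (msF S r))%N &
    S' = MSeg (msC S)
              (fun r' => if r' == r then reorder_seq i (msF S r) else msF S r').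

Definition equivS : relation (mseg Rho) := clos_refl_sym_trans _ reorder_step.

Definition inRep (S : mseg Rho) : Prop :=
  [/\ admissible S, is_emseg S,
      (forall S', equivS S S' -> condN S')
    & forall r, r \in msC S -> forall s, s \in msF S r ->
        (`|muhat s|)%:~R <= sa s].

End MSeg.

(** A reordering step swaps two nested segments; the inner one keeps its
    multiplicity u, while the multiplicity v of the outer one becomes 2u - v.
    Going from inner to outer, b grows by exactly |A' - A| + |B' - B|, which
    by (N) bounds |v - u|; so |u| <= b forces both |v| <= b' and |2u - v| <=
    b', and |mu| <= b holds for the old pair iff it holds for the new one,
    both being equivalent to the bound on the inner segment. As every member
    of [S] satisfies (N), the bound propagates from S along the whole class. *)

From mathcomp Require Import all_boot all_order all_algebra.
From Stdlib Require Import Relations.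
From mathcomp Require Import lra.
Import Order.TTheory GRing.Theory Num.Theory.
Local Open Scope ring_scope.

Lemma clos_rst_iff {A : Type} {R : relation A} {C P : A -> Prop} :
    (forall x y, R x y -> C x -> (P x <-> P y)) ->
  forall x y, (forall z, clos_refl_sym_trans A R x z -> C z) ->
  clos_refl_sym_trans A R x y -> (P x <-> P y).
Proof.
move=> RP x y Cx xy.
suff: forall u v, clos_refl_sym_trans A R u v ->
    clos_refl_sym_trans A R x u -> (P u <-> P v).
  by apply; [exact: xy | exact: rst_refl].
move=> {y xy} u v; elim=> {u v} [u v uv xu | u _ | u v vu IH xu | u v w uv IHuv _ IHvw xu].
- exact: RP (Cx u xu).
- by [].
- by apply: iff_sym; apply: IH; apply: rst_trans xu (rst_sym _ _ _ _ vu).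
- exact: iff_trans (IHuv xu) (IHvw (rst_trans _ _ _ _ _ xu uv)).
Qed.

Lemma nested_segment_norm_bound {R : realFieldType} {A B A' B' u v : R} :
    B' <= B -> A <= A' ->
    `|u| <= A - B + 1 -> `|v - u| <= `|A' - A| + `|B' - B| ->
  `|v| <= A' - B' + 1 /\ `|2 * u - v| <= A' - B' + 1.
Proof.
move=> B'B AA'; rewrite (ger0_norm (_ : 0 <= A' - A)) ?subr_ge0 //.
rewrite (ler0_norm (_ : B' - B <= 0)) ?subr_le0 //.
by rewrite !ler_norml => /andP[? ?] /andP[? ?]; split; apply/andP; split; lra.
Qed.

Definition mu_bounded (s : fseg) : bool := (`|smu s|)%:~R <= sb s.

Definition condN_pair (x y : fseg) : bool :=
  (`|smu y - smu x|)%:~R <= `|sA y - sA x| + `|sB y - sB x|.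

Definition seg_sub (x y : fseg) : bool := (sB y <= sB x) && (sA x <= sA y).

Definition reorder_pair (x y : fseg) : seq fseg :=
  if seg_sub x y then [:: FSeg (sA y) (sB y) (2 * smu x - smu y); x]
  else if seg_sub y x then [:: y; FSeg (sA x) (sB x) (2 * smu y - smu x)]
  else [:: x; y].

Lemma condN_pairC (x y : fseg) : condN_pair x y = condN_pair y x.
Proof. by rewrite /condN_pair distrC [`|sA _ - _|]distrC [`|sB _ - _|]distrC. Qed.

Lemma mu_bounded_sub {x y : fseg} : seg_sub x y -> condN_pair x y ->
  mu_bounded x -> mu_bounded y && mu_bounded (FSeg (sA y) (sB y) (2 * smu x - smu y)).
Proof.
case/andP=> yx xy; rewrite /condN_pair /mu_bounded /sb /=.
rewrite !intr_norm !rmorphB /= rmorphM /= => N bx.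
by have [-> ->] := nested_segment_norm_bound yx xy bx N.
Qed.

Lemma all_mu_bounded_reorder_pair (x y : fseg) : condN_pair x y ->
  all mu_bounded (reorder_pair x y) = mu_bounded x && mu_bounded y.
Proof.
rewrite /reorder_pair => N.
case: ifP => [xy|_]; last case: ifP => [yx|_]; rewrite /= ?andbT //.
  apply/idP/idP => [/andP[_ bx] | /andP[bx _]].
    by rewrite bx; case/andP: (mu_bounded_sub xy N bx).
  by rewrite bx andbT; case/andP: (mu_bounded_sub xy N bx).
rewrite condN_pairC in N.
apply/idP/idP => [/andP[by_ _] | /andP[_ by_]].
  by rewrite by_ andbT; case/andP: (mu_bounded_sub yx N by_).
by rewrite by_; case/andP: (mu_bounded_sub yx N by_).
Qed.

Lemma set_nth_cat {T : Type} (x0 : T) (t s : seq T) (n : nat) (z : T) :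
  set_nth x0 (t ++ s) (size t + n) z = t ++ set_nth x0 s n z.
Proof. by elim: t => //= a t ->. Qed.

Lemma cat_take_nth2_drop {T : Type} (x0 : T) {i : nat} {l : seq T} :
  (i.+1 < size l)%N -> l = take i l ++ [:: nth x0 l i, nth x0 l i.+1 & drop i.+2 l].
Proof. by move=> il; rewrite -!drop_nth ?cat_take_drop // ltnW. Qed.

Lemma reorder_seqE (i : nat) (l : seq fseg) : (i.+1 < size l)%N ->
  reorder_seq i l =
  take i l ++ reorder_pair (nth fseg0 l i) (nth fseg0 l i.+1) ++ drop i.+2 l.
Proof.
move=> il; rewrite /reorder_seq /reorder_pair.
set x := nth fseg0 l i; set y := nth fseg0 l i.+1.
set t := take i l; set d := drop i.+2 l.
have el : l = t ++ [:: x, y & d] by exact: cat_take_nth2_drop.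
have <- : size t = i by rewrite size_take ltnW.
clearbody x y t d; rewrite {}el -[size t]addn0 -addnS !set_nth_cat /seg_sub.
by case: ifP => _ //; case: ifP.
Qed.

Lemma all_mu_bounded_reorder_seq (i : nat) (l : seq fseg) : (i.+1 < size l)%N ->
    condN_pair (nth fseg0 l i) (nth fseg0 l i.+1) ->
  all mu_bounded (reorder_seq i l) = all mu_bounded l.
Proof.
move=> il N; rewrite reorder_seqE // [in RHS](cat_take_nth2_drop fseg0 il).
by rewrite !all_cat all_mu_bounded_reorder_pair //= -andbA.
Qed.

Definition all_mu_bounded {Rho : eqType} (S : mseg Rho) : Prop :=
  forall r, r \in msC S -> all mu_bounded (msF S r).

Lemma reorder_step_all_mu_bounded {Rho : eqType} (S S' : mseg Rho) :
  reorder_step S S' -> condN S -> (all_mu_bounded S <-> all_mu_bounded S').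
Proof.
case=> r rin [i il ->] NS.
have N : condN_pair (nth fseg0 (msF S r) i) (nth fseg0 (msF S r) i.+1).
  exact: NS r rin i.+1 il.
split=> bS r' /= r'in.
  by case: eqP => _; rewrite ?all_mu_bounded_reorder_seq //; apply: bS.
by move: (bS r' r'in) => /=; case: eqP => [->|//]; rewrite all_mu_bounded_reorder_seq.
Qed.

Theorem proposition3p4 (Rho : eqType) (dimr : Rho -> nat) (orthr : Rho -> bool)
    (Q : zmodType) (detr : Rho -> Q) (S : mseg Rho) :
  (forall r, (0 < dimr r)%N) ->
  inRep dimr orthr detr S ->
  forall S' : mseg Rho, equivS S S' ->
    is_fmseg dimr orthr detr S' -> is_emseg dimr orthr detr S'.
Proof.
move=> _ [_ [_ esegS] NS _] S' SS' fS'.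
have bS : all_mu_bounded S.
  by move=> r rin; apply/allP => s sin; case: (esegS r rin s sin).
have bS' : all_mu_bounded S'.
  exact: (clos_rst_iff (@reorder_step_all_mu_bounded Rho) _ _ NS SS').1 bS.
split=> // r rin s sin; split; last exact: allP (bS' r rin) s sin.
by case: fS' => [[_ fsegS'] _ _ _ _]; apply: fsegS' sin.
Qed.
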